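(* Let $A,B$ be Hermitian operators on $\mathbb{C}^N$ having $N_A$ and $N_B$ distinct eigenvalues, respectively. If the KD distribution of $(A,B)$ distinguishes all states (i.e. $\rho\mapsto K^{A,B}_\rho$ is injective on density operators on $\mathbb{C}^N$), then $2N^2-1\le(2N_A-1)(2N_B-1)$.
   Context: A density operator is a positive semidefinite trace-one operator. Kirkwood–Dirac (KD) distribution: for Hermitian operators $A_1,\dots,A_n$ on $\mathbb{C}^N$ and a density operator $\rho$, define $\#^{K}_{A_1,\dots,A_n}(x)=(2\pi)^{-n}\int_{\mathbb{R}^n} e^{-is_1A_1}\cdots e^{-is_nA_n}\,e^{i s\cdot x}\,d^ns$ (inverse Fourier transform in the distributional sense), and $K^{A_1,\dots,A_n}_\rho(x)=\mathrm{Tr}[\#^{K}_{A_1,\dots,A_n}(x)\,\rho]$. *)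

From mathcomp Require Import all_boot all_algebra.
From mathcomp Require Import sesquilinear spectral complex reals.
Set Implicit Arguments. Unset Strict Implicit. Unset Printing Implicit Defensive.
Import GRing.Theory Num.Theory Num.Def.
Local Open Scope ring_scope.
Local Open Scope complex_scope.
Local Open Scope sesquilinear_scope.

Section KD.
Variable R : realType.
Local Notation C := R[i].

Definition adjmx N (M : 'M[C]_N) : 'M[C]_N := M ^t conjC.

Definition is_hermitian_op N (A : 'M[C]_N) : Prop := adjmx A = A.

Definition density N (rho : 'M[C]_N) : Prop :=
  [/\ is_hermitian_op rho,
      (forall x : 'cV[C]_N, 0 <= ((x ^t conjC) *m rho *m x) 0 0)
    & \tr rho = 1].

Definition num_distinct_eigenvalues N (A : 'M[C]_N) (n : nat) : Prop :=
  exists s : seq C, [/\ uniq s, size s = n & forall a, eigenvalue A a = (a \in s)].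

(* Spectral projector of A at a (column-vector convention): the orthogonal
   projector onto ker (A - a), i.e. onto {x : 'cV_N | A *m x = a *: x};
   it is 0 when a is not an eigenvalue.  proj_ortho works with row vectors,
   the column eigenspace of A is the row eigenspace of A^T, hence the transposes. *)
Definition specproj N (A : 'M[C]_N) (a : C) : 'M[C]_N :=
  (proj_ortho (eigenspace A^T a))^T.

(* For finite-dimensional A, B with spectral decompositions A = sum_i a_i P_i,
   B = sum_j b_j Q_j, the KD quasiprobability distribution is the
   finitely supported (atomic) distribution
     K_rho^{A,B}(x) = sum_{i,j} Tr(P_i Q_j rho) delta(x1 - a_i) delta(x2 - b_j).
   We represent it by its weight function on R^2: the weight at x = (x1,x2)
   is Tr(P_A(x1) P_B(x2) rho), which vanishes off the finite set of atoms. *)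
Definition KD N (A B rho : 'M[C]_N) (x : R * R) : C :=
  \tr (specproj A (x.1)%:C *m specproj B (x.2)%:C *m rho).

Definition KD_distinguishes_states N (A B : 'M[C]_N) : Prop :=
  forall rho sigma : 'M[C]_N, density rho -> density sigma ->
    KD A B rho = KD A B sigma -> rho = sigma.
End KD.

(* K_rho^{A,B} is the matrix [tr (P_i Q_j rho)] built from the spectral projectors P_i
   of A and Q_j of B; it is linear in rho.  Since the P_i, and likewise the Q_j, sum to
   the identity, the row and column sums tr (P_i rho) and tr (Q_j rho) are real when rho
   is Hermitian, so such a matrix is fixed by N_A N_B + (N_A - 1)(N_B - 1) real numbers.
   If the KD distribution distinguishes states, a Hermitian H with vanishing KD matrix is
   traceless, and c + H and c are then positive multiples of density operators with the
   same distribution for large c, so H = 0.  Hence the N^2-dimensional real space of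
   Hermitian matrices injects linearly into that space of KD matrices. *)

From HB Require Import structures.
From mathcomp Require Import all_boot all_order all_algebra.
From mathcomp Require Import sesquilinear spectral complex reals.
From mathcomp Require boolp.
From mathcomp Require Import zify ring lra.
Import Order.TTheory GRing.Theory Num.Theory.
Local Open Scope complex_scope.
Local Open Scope ring_scope.
Local Open Scope sesquilinear_scope.
Set Implicit Arguments. Unset Strict Implicit.

Lemma eigenvalue_trmx (F : fieldType) n (A : 'M[F]_n) a :
  eigenvalue A^T a = eigenvalue A a.
Proof.
rewrite /eigenvalue /eigenspace !kermx_eq0 /row_free.
have -> : A^T - a%:M = (A - a%:M)^T by rewrite linearB /= tr_scalar_mx.
by rewrite mxrank_tr.
Qed.

Section HermitianSpectral.
Context {C : numClosedFieldType}.

Lemma adjmxM m n p (X : 'M[C]_(m, n)) (Y : 'M_(n, p)) :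
  (X *m Y)^t* = Y^t* *m X^t*.
Proof. by rewrite trmx_mul map_mxM. Qed.

Lemma adjmxZ m n (a : C) (X : 'M[C]_(m, n)) : (a *: X)^t* = a^* *: X^t*.
Proof. by rewrite linearZ /= map_mxZ. Qed.

Lemma hermitian_trmx n (X : 'M[C]_n) : X^t* = X -> X^T^t* = X^T.
Proof. by move=> hX; rewrite -[in RHS]hX -map_trmx. Qed.

Lemma proj_ortho_adj p n (U : 'M[C]_(p, n)) : (proj_ortho U)^t* = proj_ortho U.
Proof.
set P := proj_ortho U.
have P_compl_orth : P *m (1%:M - P)^t* = 0.
  apply/orthomx1P; rewrite orthomx_sym.
  have := proj_ortho_compl_sub U 1%:M; rewrite mul1mx => /submx_trans; apply.
  by rewrite submx_ortho -[P]mul1mx proj_ortho_sub.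
have P_adjK : P = P *m P^t*.
  have adjB : (1%:M - P)^t* = 1%:M - P^t*.
    by rewrite linearB /= map_mxB trmx1 map_mx1.
  by apply/eqP; rewrite -subr_eq0 -{1}[P]mulmx1 -mulmxBr -adjB P_compl_orth.
by rewrite {1}P_adjK adjmxM trmxCK -P_adjK.
Qed.

Lemma mulmx_adj_eq0 m n (E : 'M[C]_(m, n)) : E *m E^t* = 0 -> E = 0.
Proof.
move/orthomx1P => E_orth; apply/eqP; rewrite -mxrank_eq0 -(capmx_idPl E_orth).
by rewrite orthomx_ortho_disj mxrank0.
Qed.

Variables (n : nat) (G : 'M[C]_n).
Hypothesis hermG : G^t* = G.

Lemma eigenspace_adj_pairing a b :
  a *: (eigenspace G a *m (eigenspace G b)^t*) =
  b^* *: (eigenspace G a *m (eigenspace G b)^t*).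
Proof.
have eigE c : eigenspace G c *m G = c *: eigenspace G c by apply/eigenspaceP.
have adjG : G *m (eigenspace G b)^t* = (eigenspace G b *m G)^t*.
  by rewrite [RHS]adjmxM hermG.
by rewrite scalemxAl -eigE -mulmxA adjG eigE adjmxZ scalemxAr.
Qed.

Lemma hermitian_eigenvalue_real a : eigenvalue G a -> a^* = a.
Proof.
move=> eig_a; apply/eqP; rewrite eq_sym; apply: contraNT eig_a => ne_a.
have /eqP := eigenspace_adj_pairing a a.
rewrite -subr_eq0 -scalerBl scaler_eq0 subr_eq0 (negbTE ne_a) /=.
by move=> /eqP/mulmx_adj_eq0 ->.
Qed.

Lemma hermitian_eigenspace_orth a b :
  a != b -> eigenspace G a *m (eigenspace G b)^t* = 0.
Proof.
move=> ne_ab; have [eig_b|] := boolP (eigenvalue G b); last first.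
  by rewrite negbK => /eqP ->; rewrite linear0 map_mx0 mulmx0.
have /eqP := eigenspace_adj_pairing a b.
rewrite (hermitian_eigenvalue_real eig_b) -subr_eq0 -scalerBl scaler_eq0.
by rewrite subr_eq0 (negbTE ne_ab) => /eqP.
Qed.

(* The rows of the unitary [spectralmx G] are eigenvectors; each is fixed by the
   projector onto its own eigenspace and killed by the others. *)
Lemma sum_proj_ortho_eigenspace (s : seq C) :
  uniq s -> (forall a, eigenvalue G a = (a \in s)) ->
  \sum_(a <- s) proj_ortho (eigenspace G a) = 1%:M.
Proof.
move=> s_uniq eig_s.
set P := spectralmx G; set d := spectral_diag G.
have P_unit : P \in unitmx := spectral_unit G.
have PG : P *m G = diag_mx d *m P.
  have /orthomx_spectralP -> : G \is normalmx by rewrite qualifE /= hermG.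
  by rewrite !mulmxA mulmxV // mul1mx.
have row_eig k : (row k P <= eigenspace G (d 0 k))%MS.
  by apply/eigenspaceP; rewrite -row_mul PG row_mul row_diag_mx -scalemxAl -rowE.
have row_s k : d 0 k \in s.
  have row_neq0 : row k P != 0.
    apply/eqP => row0; have := row_mul k P (invmx P).
    rewrite row0 mul0mx mulmxV // => /rowP/(_ k); rewrite !mxE eqxx /= => /eqP.
    by rewrite oner_eq0.
  rewrite -eig_s; apply: contra_neq row_neq0 => E0.
  by apply/eqP; rewrite -submx0 -E0 row_eig.
set S := \sum_(a <- s) _.
have PS : P *m S = P.
  apply/row_matrixP => k; rewrite row_mul mulmx_sumr (bigD1_seq (d 0 k)) //=.
  rewrite proj_ortho_id // big1_seq ?addr0 // => a /andP[ne_a _].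
  apply: proj_ortho_0; rewrite orthomx1E; have [D ->] := submxP (row_eig k).
  by rewrite -mulmxA hermitian_eigenspace_orth ?mulmx0 // eq_sym.
by have := congr1 (mulmx (invmx P)) PS; rewrite mulKmx // mulVmx.
Qed.

End HermitianSpectral.

Section QuadraticForm.
Context {C : numClosedFieldType} {n : nat}.
Implicit Types (x : 'cV[C]_n) (H : 'M[C]_n).

Lemma quad_formE x H :
  (x^t* *m H *m x) 0 0 = \sum_j \sum_i (x i 0)^* * H i j * x j 0.
Proof.
rewrite mxE; apply: eq_bigr => j _; rewrite mxE mulr_suml.
by apply: eq_bigr => i _; rewrite !mxE.
Qed.

Lemma sqnorm_cVE x : (x^t* *m x) 0 0 = \sum_k `|x k 0| ^+ 2.
Proof. by rewrite mxE; apply: eq_bigr => k _; rewrite !mxE normCKC. Qed.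

Lemma sqnorm_ge0 x : 0 <= (x^t* *m x) 0 0.
Proof. by rewrite sqnorm_cVE sumr_ge0 // => k _; rewrite exprn_ge0. Qed.

Lemma hermitian_quad_form_real x H :
  H^t* = H -> (x^t* *m H *m x) 0 0 \is Num.real.
Proof.
move=> hermH; apply/CrealP; rewrite quad_formE rmorph_sum exchange_big /=.
apply: eq_bigr => j _; rewrite rmorph_sum; apply: eq_bigr => i _ /=.
rewrite !rmorphM /= conjCK -[in RHS]hermH !mxE.
by rewrite mulrC (mulrC (x i 0)) mulrA.
Qed.

Lemma norm_mul_le_sqnorm x i j : `|x i 0| * `|x j 0| <= \sum_k `|x k 0| ^+ 2.
Proof.
have le_sum k : `|x k 0| ^+ 2 <= \sum_k `|x k 0| ^+ 2.
  by rewrite (bigD1 k) //= lerDl sumr_ge0 // => l _; rewrite exprn_ge0.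
rewrite -(ler_pXn2r (n := 2)) ?qualifE /= ?mulr_ge0 ?sumr_ge0 //.
  by rewrite exprMn [X in _ <= X]expr2 ler_pM ?exprn_ge0.
by move=> k _; rewrite exprn_ge0.
Qed.

Lemma norm_quad_form_le x H :
  `|(x^t* *m H *m x) 0 0| <= (\sum_j \sum_i `|H i j|) * (x^t* *m x) 0 0.
Proof.
rewrite quad_formE sqnorm_cVE mulr_suml; apply: le_trans (ler_norm_sum _ _ _) _.
apply: ler_sum => j _; rewrite mulr_suml; apply: le_trans (ler_norm_sum _ _ _) _.
apply: ler_sum => i _; rewrite !normrM norm_conjC mulrAC -mulrA mulrA mulrC.
by rewrite ler_wpM2l ?norm_mul_le_sqnorm.
Qed.

End QuadraticForm.

Section KirkwoodDirac.
Variable R : realType.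
Local Notation C := R[i].

Lemma density_shift n (H : 'M[C]_n) (c : C) :
  (0 < n)%N -> H^t* = H -> \tr H = 0 ->
  0 < c -> \sum_j \sum_i `|H i j| <= c ->
  density ((n%:R * c)^-1 *: (c%:M + H)).
Proof.
move=> n_gt0 hermH trH c_gt0 le_Hc.
have k_gt0 : 0 < (n%:R * c)^-1 by rewrite invr_gt0 mulr_gt0 ?ltr0n.
set k := (n%:R * c)^-1 in k_gt0 *.
split.
- rewrite /is_hermitian_op /adjmx adjmxZ linearD map_mxD /= tr_scalar_mx.
  by rewrite map_scalar_mx /= !(CrealP (gtr0_real _)) ?hermH.
- move=> x; rewrite -scalemxAr -scalemxAl mxE mulr_ge0 ?(ltW k_gt0) //.
  rewrite mulmxDr mulmxDl mxE mul_mx_scalar -scalemxAl mxE.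
  have := norm_quad_form_le x H; move: (hermitian_quad_form_real x hermH).
  set q := (x^t* *m H *m x) 0 0 => q_real.
  move=> /le_trans/(_ (ler_wpM2r (sqnorm_ge0 x) le_Hc)).
  rewrite real_ler_norml // => /andP[lower _].
  by rewrite addrC -[c * _]opprK subr_ge0.
- rewrite mxtraceZ mxtraceD mxtrace_scalar trH addr0 -mulr_natl mulVf //.
  by rewrite mulf_neq0 ?pnatr_eq0 -?lt0n ?gt_eqF.
Qed.

Lemma KD_traceless_eq0 n (A B H : 'M[C]_n) : KD_distinguishes_states A B ->
  H^t* = H -> \tr H = 0 -> KD A B H = KD A B 0 -> H = 0.
Proof.
case: n A B H => [|n] A B H distAB hermH trH KD_H0; first by apply/matrixP => -[].
pose c : C := \sum_j \sum_i `|H i j| + 1.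
have sum_ge0 : 0 <= \sum_j \sum_i `|H i j| by do 2!apply: sumr_ge0 => ? _.
have c_gt0 : 0 < c by rewrite ltr_wpDl.
have le_sum_c : \sum_j \sum_i `|H i j| <= c by rewrite lerDl.
have rhoH := density_shift (ltn0Sn n) hermH trH c_gt0 le_sum_c.
have herm0 : (0 : 'M[C]_n.+1)^t* = 0 by rewrite linear0 map_mx0.
have le_0c : \sum_j \sum_i `|(0 : 'M[C]_n.+1) i j| <= c.
  apply: le_trans le_sum_c; rewrite big1 // => j _.
  by rewrite big1 // => i _; rewrite mxE normr0.
have rho0 := density_shift (ltn0Sn n) herm0 (mxtrace0 _ _) c_gt0 le_0c.
have k_neq0 : (n.+1%:R * c)^-1 != 0.
  by rewrite invr_eq0 mulf_neq0 ?pnatr_eq0 ?gt_eqF.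
apply/(addrI c%:M)/(scalerI k_neq0)/(distAB _ _ rhoH rho0).
apply: boolp.funext => x; rewrite /KD -!scalemxAr !mxtraceZ !mulmxDr !mxtraceD.
by have := congr1 (fun f => f x) KD_H0; rewrite /KD => ->.
Qed.

Lemma specproj_adj n (A : 'M[C]_n) a : (specproj A a)^t* = specproj A a.
Proof. exact/hermitian_trmx/proj_ortho_adj. Qed.

Lemma specproj_eq0 n (A : 'M[C]_n) a : ~~ eigenvalue A a -> specproj A a = 0.
Proof.
rewrite -eigenvalue_trmx /eigenvalue negbK => /eqP E0.
by apply/eqP; rewrite /specproj trmx_eq0 -submx0 proj_orthoE E0.
Qed.

Lemma sum_specproj n (A : 'M[C]_n) (s : seq C) :
  A^t* = A -> uniq s -> (forall a, eigenvalue A a = (a \in s)) ->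
  \sum_(i < size s) specproj A s`_i = 1%:M.
Proof.
move=> hermA s_uniq eig_s.
rewrite -(big_mkord xpredT (fun i => specproj A s`_i)) -(big_nth 0 xpredT (specproj A)).
have -> : \sum_(a <- s) specproj A a =
          (\sum_(a <- s) proj_ortho (eigenspace A^T a))^T by rewrite linear_sum.
have eigT a : eigenvalue A^T a = (a \in s) by rewrite eigenvalue_trmx.
by rewrite (sum_proj_ortho_eigenspace (hermitian_trmx hermA) s_uniq eigT) trmx1.
Qed.

End KirkwoodDirac.

Section KDMatrix.
Context {C : numClosedFieldType} {N m n : nat}.
Variables (P : 'I_m -> 'M[C]_N) (Q : 'I_n -> 'M[C]_N).

Definition kdmx (H : 'M[C]_N) : 'M[C]_(m, n) :=
  \matrix_(i, j) \tr (P i *m Q j *m H).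

Lemma kdmx_is_linear : linear kdmx.
Proof.
move=> a H K; apply/matrixP => i j.
by rewrite !mxE mulmxDr -scalemxAr mxtraceD mxtraceZ.
Qed.

HB.instance Definition _ :=
  GRing.isLinear.Build C 'M[C]_N 'M[C]_(m, n) _ kdmx kdmx_is_linear.

Lemma kdmx_row_sum H i : \sum_j Q j = 1%:M -> \sum_j kdmx H i j = \tr (P i *m H).
Proof.
move=> sumQ; under eq_bigr => j _ do rewrite mxE.
by rewrite -linear_sum /= -mulmx_suml -mulmx_sumr sumQ mulmx1.
Qed.

Lemma kdmx_col_sum H j : \sum_i P i = 1%:M -> \sum_i kdmx H i j = \tr (Q j *m H).
Proof.
move=> sumP; under eq_bigr => i _ do rewrite mxE.
by rewrite -linear_sum /= -!mulmx_suml sumP mul1mx.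
Qed.

Lemma kdmx_sum H : \sum_i P i = 1%:M -> \sum_j Q j = 1%:M ->
  \sum_i \sum_j kdmx H i j = \tr H.
Proof.
move=> sumP sumQ; under eq_bigr => i _ do rewrite kdmx_row_sum //.
by rewrite -linear_sum /= -mulmx_suml sumP mul1mx.
Qed.

End KDMatrix.

Lemma trace_hermitian_mul_real {C : numClosedFieldType} n (P H : 'M[C]_n) :
  P^t* = P -> H^t* = H -> \tr (P *m H) \is Num.real.
Proof.
move=> hermP hermH; apply/CrealP.
have tr_adj : \tr ((P *m H)^t*) = (\tr (P *m H))^* by rewrite trace_map_mx mxtrace_tr.
by rewrite -tr_adj adjmxM hermP hermH mxtrace_mulC.
Qed.

Lemma sumr_eq0_but_last (V : nmodType) p (F : 'I_p -> V) :
  \sum_k F k = 0 -> (forall k : 'I_p, (k < p.-1)%N -> F k = 0) -> forall k, F k = 0.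
Proof.
move=> sumF0 F0 l; have [lt_l|ge_l] := ltnP l p.-1; first exact: F0.
move: sumF0; rewrite (bigD1 l) //= big1 ?addr0 // => k ne_kl; apply: F0.
have := ltn_ord k; have := ltn_ord l; move: ne_kl ge_l; rewrite -val_eqE /=; lia.
Qed.

Lemma linear_inj_leq (F : fieldType) m k (f : 'rV[F]_m -> 'rV[F]_k) :
  linear f -> (forall v, f v = 0 -> v = 0) -> (m <= k)%N.
Proof.
move=> lin_f inj_f.
pose fL : {linear 'rV[F]_m -> 'rV[F]_k} :=
  HB.pack f (GRing.isLinear.Build F _ _ _ f lin_f).
have : row_free (lin1_mx fL).
  rewrite -kermx_eq0; apply/rowV0P => v /sub_kermxP.
  by rewrite mul_rV_lin1; exact: inj_f.
by rewrite /row_free => /eqP <-; exact: rank_leq_col.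
Qed.

Section RealCoordinates.
Variable R : realType.
Local Notation C := R[i].
Local Notation Re := (@complex.Re R).
Local Notation Im := (@complex.Im R).

Lemma Im_sum I (r : seq I) (F : I -> C) :
  Im (\sum_(i <- r) F i) = \sum_(i <- r) Im (F i).
Proof. by apply: big_morph => // -[a b] [c d]. Qed.

Lemma Im_real (z : C) : z \is Num.real -> Im z = 0.
Proof. by case: z => a b; rewrite complex_real => /eqP. Qed.

Lemma Re_scale_add (a : R) (x y : C) : Re (a%:C * x + y) = a * Re x + Re y.
Proof. by case: x y => [b c] [d e] /=; rewrite !mul0r subr0. Qed.

Lemma Im_scale_add (a : R) (x y : C) : Im (a%:C * x + y) = a * Im x + Im y.
Proof. by case: x y => [b c] [d e] /=; rewrite !mul0r addr0. Qed.

(* This is where the count [m * n + (m - 1) * (n - 1)] comes from: real margins fix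
   the imaginary parts in the last row and column. *)
Lemma real_margins_eq0 m n (M : 'M[C]_(m, n)) :
  (forall i j, Re (M i j) = 0) ->
  (forall (i : 'I_m.-1) (j : 'I_n.-1),
     Im (M (widen_ord (leq_pred m) i) (widen_ord (leq_pred n) j)) = 0) ->
  (forall i, \sum_j M i j \is Num.real) -> (forall j, \sum_i M i j \is Num.real) ->
  M = 0.
Proof.
move=> ReM ImM real_rows real_cols.
have ImM_upper (i : 'I_m) j : (i < m.-1)%N -> Im (M i j) = 0.
  move=> lt_i; apply: (sumr_eq0_but_last (F := fun j => Im (M i j))).
    by rewrite -Im_sum Im_real.
  move=> k lt_k; have := ImM (Ordinal lt_i) (Ordinal lt_k).
  by congr (Im (M _ _) = 0); apply: val_inj.
have ImM0 i j : Im (M i j) = 0.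
  apply: (sumr_eq0_but_last (F := fun i => Im (M i j))) => [|k].
    by rewrite -Im_sum Im_real.
  exact: ImM_upper.
apply/matrixP => i j; rewrite mxE; move: (ReM i j) (ImM0 i j).
by case: (M i j) => a b /= -> ->.
Qed.

Definition reim_coords m n (M : 'M[C]_(m, n)) : 'rV[R]_(m * n + m.-1 * n.-1) :=
  row_mx (mxvec (map_mx Re M))
    (mxvec (\matrix_(i, j)
              Im (M (widen_ord (leq_pred m) i) (widen_ord (leq_pred n) j)))).

Lemma reim_coordsP m n (a : R) (M M' : 'M[C]_(m, n)) :
  reim_coords (a%:C *: M + M') = a *: reim_coords M + reim_coords M'.
Proof.
rewrite /reim_coords scale_row_mx add_row_mx -!linearZ -!linearD /=.
congr row_mx; congr mxvec; apply/matrixP => i j.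
  by rewrite !mxE Re_scale_add.
by rewrite !mxE Im_scale_add.
Qed.

Lemma reim_coords_eq0 m n (M : 'M[C]_(m, n)) : reim_coords M = 0 ->
  (forall i, \sum_j M i j \is Num.real) -> (forall j, \sum_i M i j \is Num.real) ->
  M = 0.
Proof.
move/eqP; rewrite row_mx_eq0 !mxvec_eq0 => /andP[/eqP ReM /eqP ImM].
move=> real_rows real_cols.
apply: real_margins_eq0 => // i j.
- by have /matrixP/(_ i j) := ReM; rewrite !mxE.
- by have /matrixP/(_ i j) := ImM; rewrite !mxE.
Qed.

Definition herm_of_real N (X : 'M[R]_N) : 'M[C]_N :=
  \matrix_(i, j) Complex (X i j + X j i) (X i j - X j i).

Lemma herm_of_real_adj N (X : 'M[R]_N) : (herm_of_real X)^t* = herm_of_real X.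
Proof.
have conjE (a b : R) : (Complex a b)^* = Complex a (- b) :> C by [].
by apply/matrixP => i j; rewrite !mxE conjE addrC opprB.
Qed.

Lemma herm_of_realP N (a : R) (X Y : 'M[R]_N) :
  herm_of_real (a *: X + Y) = a%:C *: herm_of_real X + herm_of_real Y.
Proof.
apply/matrixP => i j; rewrite !mxE.
apply/eqP; rewrite eq_complex /= !mul0r subr0 addr0.
by apply/andP; split; apply/eqP; ring.
Qed.

Lemma herm_of_real_eq0 N (X : 'M[R]_N) : herm_of_real X = 0 -> X = 0.
Proof.
move=> /matrixP X0; apply/matrixP => i j.
by have := X0 i j; rewrite !mxE => -[]; lra.
Qed.

End RealCoordinates.

Section KDDimension.
Variables (R : realType) (N : nat) (A B : 'M[R[i]]_N) (s t : seq R[i]).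
Hypotheses (hermA : A^t* = A) (hermB : B^t* = B).
Hypotheses (s_uniq : uniq s) (t_uniq : uniq t).
Hypothesis eig_s : forall a, eigenvalue A a = (a \in s).
Hypothesis eig_t : forall b, eigenvalue B b = (b \in t).

Let P (i : 'I_(size s)) := specproj A s`_i.
Let Q (j : 'I_(size t)) := specproj B t`_j.
Let sum_P : \sum_i P i = 1%:M := sum_specproj hermA s_uniq eig_s.
Let sum_Q : \sum_j Q j = 1%:M := sum_specproj hermB t_uniq eig_t.

Lemma KD_eq_kdmx rho sigma :
  kdmx P Q rho = kdmx P Q sigma -> KD A B rho = KD A B sigma.
Proof.
move=> /matrixP kd_eq; apply: boolp.funext => x; rewrite /KD.
have [x1_s|] := boolP ((x.1)%:C \in s); last first.
  by rewrite -eig_s => /specproj_eq0 ->; rewrite !mul0mx.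
have [x2_t|] := boolP ((x.2)%:C \in t); last first.
  by rewrite -eig_t => /specproj_eq0 ->; rewrite mulmx0 !mul0mx.
rewrite -index_mem in x1_s; rewrite -index_mem in x2_t.
have := kd_eq (Ordinal x1_s) (Ordinal x2_t).
by rewrite !mxE /P /Q /= !nth_index // -index_mem.
Qed.

Hypothesis distinguishes : KD_distinguishes_states A B.

Lemma kdmx_hermitian_eq0 H : H^t* = H -> kdmx P Q H = 0 -> H = 0.
Proof.
move=> hermH kd0; apply: KD_traceless_eq0 distinguishes hermH _ _.
  rewrite -(kdmx_sum H sum_P sum_Q) kd0 big1 // => i _.
  by rewrite big1 // => j _; rewrite mxE.
by apply: KD_eq_kdmx; rewrite kd0 linear0.
Qed.

Definition kd_coords (v : 'rV[R]_(N * N)) :=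
  reim_coords (kdmx P Q (herm_of_real (vec_mx v))).

Lemma kd_coords_is_linear : linear kd_coords.
Proof.
by move=> a u v; rewrite /kd_coords linearP herm_of_realP linearP reim_coordsP.
Qed.

Lemma kd_coords_eq0 v : kd_coords v = 0 -> v = 0.
Proof.
set H := herm_of_real (vec_mx v); have hermH : H^t* = H := herm_of_real_adj _.
move=> /reim_coords_eq0 kd0; rewrite -[v]vec_mxK.
suff /herm_of_real_eq0 -> : H = 0 by rewrite linear0.
apply: kdmx_hermitian_eq0 => //; apply: kd0 => [i|j].
- by rewrite kdmx_row_sum // trace_hermitian_mul_real ?specproj_adj.
- by rewrite kdmx_col_sum // trace_hermitian_mul_real ?specproj_adj.
Qed.

Lemma KD_dim_le : (N * N <= size s * size t + (size s).-1 * (size t).-1)%N.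
Proof. exact: linear_inj_leq kd_coords_is_linear kd_coords_eq0. Qed.

End KDDimension.

Theorem proposition11 (R : realType) (N NA NB : nat) (A B : 'M[R[i]]_N) :
  is_hermitian_op A -> is_hermitian_op B ->
  num_distinct_eigenvalues A NA -> num_distinct_eigenvalues B NB ->
  KD_distinguishes_states A B ->
  (2 * N ^ 2 - 1 <= (2 * NA - 1) * (2 * NB - 1))%N.
Proof.
move=> hermA hermB [s [s_uniq <- eig_s]] [t [t_uniq <- eig_t]] distinguishes.
have := KD_dim_le hermA hermB s_uniq t_uniq eig_s eig_t distinguishes.
rewrite expnS expn1; nia.
Qed.
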